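(* Let $s$ be a positive integer and $D^\infty=\{a=(a_{i,j})_{i,j\ge0,\ i+j>2s}:\ a_{i,j}\in\mathbb{C},\ |a_{i,j}|\le1\}$. For $a$ put $\tilde a(\xi,\eta)=\sum_{i+j>2s}a_{i,j}\xi^i\eta^j$, and let $b^*(\xi,\eta,a)$ be the formal power series in $\xi,\eta$ and the variables $a_{i,j}$, without constant term, determined by $$b^*(\xi,\eta,a)=\tilde a\big(e^{b^*(\xi,\eta,a)}\xi,\ e^{b^*(\xi,\eta,a)}\eta\big).$$ Define $\psi_a(\xi,\eta)=\big(e^{b^*(\xi,\eta,a)}\xi,\ e^{b^*(\xi,\eta,a)}\eta\big)$. Then there exists a constant $R_1\in(0,1)$, independent of $a\in D^\infty$, such that $\psi_a$ is given by power series converging (absolutely) for $(\xi,\eta,a)\in\Delta_{R_1}\times D^\infty$, and for each $a\in D^\infty$, $\psi_a$ maps $\Delta_{R_1}$ into $\Delta_{1/3}$.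
   Context: $\Delta_r=\{(\xi,\eta)\in\mathbb{C}^2:|\xi|<r,|\eta|<r\}$. *)

From HB Require Import structures.
From mathcomp Require Import all_boot all_order all_algebra.
From mathcomp Require Import complex.
From mathcomp.multinomials Require Export monalg.
From mathcomp Require Export reals ereal esum sequences topology normedtype.
From mathcomp Require Import classical_sets finmap.

Set Implicit Arguments.
Unset Strict Implicit.
Unset Printing Implicit Defensive.

Import Order.TTheory GRing.Theory Num.Theory.
Import numFieldNormedType.Exports.
Local Open Scope ring_scope.

Section Defs.
Variable R : realType.

Local Notation C := R[i].

Definition amonom := {cmonom (nat * nat)%type}.

Definition apoly := {malg C[amonom]}.

Definition avar (i j : nat) : apoly := << ucm ((i, j) : (nat * nat)%type) >>.

(* Formal power series in xi, eta with coefficients in apoly, i.e. formal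
   power series in xi, eta and the a_{i,j}: f p q is the coefficient of
   xi^p eta^q. *)
Definition fps := nat -> nat -> apoly.

Definition fps_one : fps := fun p q => if (p == 0%N) && (q == 0%N) then 1 else 0.
Definition fps_xi : fps := fun p q => if (p == 1%N) && (q == 0%N) then 1 else 0.
Definition fps_eta : fps := fun p q => if (p == 0%N) && (q == 1%N) then 1 else 0.

Definition fps_mul (f g : fps) : fps := fun p q =>
  \sum_(k < p.+1) \sum_(l < q.+1) f k l * g (p - k)%N (q - l)%N.

Definition fps_pow (f : fps) (n : nat) : fps := iter n (fps_mul f) fps_one.

(* exp f = sum_n f^n / n!, for f WITHOUT constant term (f 0 0 = 0): then
   f^n has no monomial of (xi,eta)-degree < n, so the coefficient of
   xi^p eta^q only receives contributions from n <= p + q. *)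
Definition fps_exp (f : fps) : fps := fun p q =>
  \sum_(n < (p + q).+1) (n`!%:R)^-1 *: fps_pow f n p q.

Definition psi1 (b : fps) : fps := fps_mul (fps_exp b) fps_xi.
Definition psi2 (b : fps) : fps := fps_mul (fps_exp b) fps_eta.

(* Only terms with i <= p and j <= q contribute to the coefficient of
   xi^p eta^q, since (e^b xi)^i (e^b eta)^j is divisible by xi^i eta^j. *)
Definition is_bstar (s : nat) (b : fps) : Prop :=
  b 0%N 0%N = 0 /\
  forall p q, b p q =
    \sum_(i < p.+1) \sum_(j < q.+1)
      (if (2 * s < i + j)%N then
         avar i j * fps_mul (fps_pow (psi1 b) i) (fps_pow (psi2 b) j) p q
       else 0).

Definition meval (a : nat * nat -> C) (m : amonom) : C :=
  \prod_(k <- finsupp m) a k ^+ m k.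

Definition peval (a : nat * nat -> C) (P : apoly) : C :=
  \sum_(m <- msupp P) P@_m * meval a m.

Definition abs_conv (f : fps) (x y : C) (a : nat * nat -> C) : Prop :=
  (\esum_(t in [set: (nat * nat * amonom)%type])
     (complex.Re `|(f t.1.1 t.1.2)@_t.2 * meval a t.2 * x ^+ t.1.1 * y ^+ t.1.2|)%:E
   < +oo)%E.

Definition fps_psum (f : fps) (x y : C) (a : nat * nat -> C) (N : nat) : C :=
  \sum_(p < N) \sum_(q < N) peval a (f p q) * x ^+ p * y ^+ q.

Definition fps_val (f : fps) (x y : C) (a : nat * nat -> C) : C :=
  Complex (limn (fun N => complex.Re (fps_psum f x y a N)))
          (limn (fun N => complex.Im (fps_psum f x y a N))).

Definition in_bidisc (r : R) (x y : C) : Prop :=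
  `|x| < r%:C%C /\ `|y| < r%:C%C.

Definition in_Dinf (s : nat) (a : nat * nat -> C) : Prop :=
  forall i j, (2 * s < i + j)%N -> `|a (i, j)| <= 1.

End Defs.

(* The defining equation [b = a~(e^b xi, e^b eta)] expresses the coefficient of
   [xi^p eta^q] of [b] through coefficients of total degree [< p + q] (multiplying
   by [xi] or [eta] raises the degree), so iterating its right-hand side from [0]
   stabilises degree by degree and produces [b^*].

   For the estimates, a coefficient [P] (a polynomial in the [a_ij]) is measured by
   [|P|_a], the value at [|a|] of [P] with its coefficients replaced by their
   moduli: this norm is submultiplicative and [|a_ij|_a <= 1] on [D^oo].  The
   truncated majorant sums [B_f(N, M) = sum_(p < N, q < M) |f_pq|_a r^(p+q)] are
   submultiplicative under the Cauchy product, hence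
   [B_psi(N + 1, M) = r B_(e^b)(N, M) <= r sum_n B_b(N, M)^n <= 2r] as soon as
   [B_b(N, M) <= 1/2].  Conversely [B_b <= sum_(i+j>2s) B_psi^(i+j) <= 16 r], which
   is [<= 1/2] for [r = 1/32], so induction on [N + M] gives [B_psi <= 1/16]
   throughout.  This bounds the series of [psi_a] absolutely on [Delta_(1/32)], and
   the real and imaginary parts of its value by [1/16], whence [|psi_a| < 1/3]. *)

From HB Require Import structures.
From mathcomp Require Import all_boot all_order all_algebra.
From mathcomp Require Import complex finmap.
From mathcomp.multinomials Require Import monalg.
From mathcomp Require Import classical_sets boolp functions reals ereal esum.
From mathcomp Require Import cardinality sequences normedtype fsbigop.
From mathcomp Require Import zify ring lra.

Set Implicit Arguments.
Unset Strict Implicit.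
Unset Printing Implicit Defensive.

Import Order.TTheory GRing.Theory Num.Theory Normc.
Import numFieldNormedType.Exports.
Local Open Scope ring_scope.

Section NatSums.
Variable R : realFieldType.
Implicit Types (F : nat -> R) (H : nat -> nat -> R) (x : R).

Lemma ler_sum_nat_widen F n m :
  (n <= m)%N -> (forall i, 0 <= F i) -> \sum_(0 <= i < n) F i <= \sum_(0 <= i < m) F i.
Proof.
move=> le_nm F_ge0; rewrite (@big_cat_nat _ _ _ n 0 m) //= lerDl.
exact: sumr_ge0.
Qed.

Lemma sum_antidiagonalE H N :
  \sum_(0 <= p < N) \sum_(0 <= k < p.+1) H k (p - k)%N =
  \sum_(0 <= k < N) \sum_(0 <= j < N - k) H k j.
Proof.
elim: N => [|N IHN]; first by rewrite !big_geq.
rewrite big_nat_recr //= IHN.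
transitivity (\sum_(0 <= k < N.+1) (\sum_(0 <= j < N - k) H k j + H k (N - k)%N)).
  rewrite big_split /= [X in _ = X + _]big_nat_recr //= subnn.
  by rewrite [X in _ = _ + X + _]big_geq // addr0.
apply: eq_big_nat => k /andP [_ lt_kN].
by rewrite subSn // big_nat_recr.
Qed.

Lemma sum_antidiagonal_le H N : (forall i j, 0 <= H i j) ->
  \sum_(0 <= p < N) \sum_(0 <= k < p.+1) H k (p - k)%N <=
  \sum_(0 <= k < N) \sum_(0 <= j < N) H k j.
Proof.
move=> H_ge0; rewrite sum_antidiagonalE; apply: ler_sum => k _.
exact: ler_sum_nat_widen (leq_subr k N) (H_ge0 k).
Qed.

Lemma sum_antidiagonal2_le (G : nat -> nat -> nat -> nat -> R) N M :
  (forall k l k' l', 0 <= G k l k' l') ->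
  \sum_(0 <= p < N) \sum_(0 <= q < M) \sum_(0 <= k < p.+1) \sum_(0 <= l < q.+1)
     G k l (p - k)%N (q - l)%N <=
  \sum_(0 <= k < N) \sum_(0 <= l < M) \sum_(0 <= k' < N) \sum_(0 <= l' < M) G k l k' l'.
Proof.
move=> G_ge0; under eq_bigr do rewrite exchange_big /=.
pose H k k' := \sum_(0 <= q < M) \sum_(0 <= l < q.+1) G k l k' (q - l)%N.
have H_ge0 k k' : 0 <= H k k' by do 2 (apply: sumr_ge0 => ? _).
apply: le_trans (@sum_antidiagonal_le H N H_ge0) _.
apply: ler_sum => k _; rewrite [X in _ <= X]exchange_big /=; apply: ler_sum => k' _.
exact: (@sum_antidiagonal_le (fun l l' => G k l k' l') M (G_ge0 k ^~ k')).
Qed.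

Lemma geometric_sum_le2 x K : 0 <= x -> x <= 1 / 2 -> \sum_(0 <= n < K) x ^+ n <= 2.
Proof.
move=> x_ge0 x_le; elim: K => [|K IHK]; first by rewrite big_geq.
rewrite big_nat_recl // expr0.
under eq_bigr do rewrite exprS.
rewrite -mulr_sumr; have : x * \sum_(0 <= i < K) x ^+ i <= 1 / 2 * 2.
  by apply: ler_pM => //; apply: sumr_ge0 => i _; apply: exprn_ge0.
lra.
Qed.

(* For [i + j > 0], [x^(i+j) <= 2x * 2^(-i-j)]; then sum two geometric series. *)
Lemma sum_expr_deg_gt_le (s : nat) x N M : 0 <= x -> x <= 1 / 2 ->
  \sum_(0 <= i < N) \sum_(0 <= j < M)
     (if (2 * s < i + j)%N then x ^+ i * x ^+ j else 0) <= 8 * x.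
Proof.
move=> x_ge0 x_le; set h := 1 / 2 : R.
have h_ge0 : 0 <= h by rewrite /h; lra.
have pointwise i j : (0 < i + j)%N -> x ^+ i * x ^+ j <= 2 * x * (h ^+ i * h ^+ j).
  rewrite -!exprD; case: (i + j)%N => [//|n] _.
  rewrite !exprS mulrA [2 * x * h]mulrAC (_ : 2 * h = 1) ?mul1r; last by rewrite /h; lra.
  by apply: ler_wpM2l => //; apply: lerXn2r; rewrite ?nnegrE.
apply: (@le_trans _ _ (\sum_(0 <= i < N) \sum_(0 <= j < M) 2 * x * (h ^+ i * h ^+ j))).
  apply: ler_sum => i _; apply: ler_sum => j _; case: ifP => [lt_s|_].
    by apply: pointwise; apply: leq_ltn_trans lt_s.
  by apply: mulr_ge0; [lra | apply: mulr_ge0; apply: exprn_ge0].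
have -> : \sum_(0 <= i < N) \sum_(0 <= j < M) 2 * x * (h ^+ i * h ^+ j) =
          2 * x * ((\sum_(0 <= i < N) h ^+ i) * (\sum_(0 <= j < M) h ^+ j)).
  by rewrite big_distrlr mulr_sumr; apply: eq_bigr => i _; rewrite mulr_sumr.
rewrite (_ : 8 * x = 2 * x * (2 * 2)); last by ring.
apply: ler_wpM2l; first lra.
have geo0 K : 0 <= \sum_(0 <= n < K) h ^+ n by apply: sumr_ge0 => n _; apply: exprn_ge0.
have geo K : \sum_(0 <= n < K) h ^+ n <= 2 by apply: geometric_sum_le2; rewrite /h; lra.
exact: ler_pM.
Qed.

End NatSums.

Section ComplexModulus.
Variable R : realType.
Implicit Types (z w : R[i]) (r : R).

Lemma normr_normc z : `|z| = (normc z)%:C%C.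
Proof. by case: z. Qed.

Lemma Re_normr z : complex.Re `|z| = normc z.
Proof. by case: z. Qed.

Lemma normc_ge0 z : 0 <= normc z.
Proof. by case: z => x y; apply: sqrtr_ge0. Qed.

Lemma normcX z n : normc (z ^+ n) = normc z ^+ n.
Proof. by elim: n => [|n IHn]; rewrite ?normc1 // !exprS normcM IHn. Qed.

Lemma normc_sum I (r : seq I) (P : pred I) (F : I -> R[i]) :
  normc (\sum_(i <- r | P i) F i) <= \sum_(i <- r | P i) normc (F i).
Proof.
elim/big_ind2: _ => [|z1 r1 z2 r2 le1 le2|//]; first by rewrite normc0.
exact: le_trans (le_normcD _ _) (lerD le1 le2).
Qed.

Lemma normc_le z r : `|z| <= r%:C%C -> normc z <= r.
Proof. by rewrite normr_normc lecR. Qed.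

Lemma normc_lt z r : `|z| < r%:C%C -> normc z < r.
Proof. by rewrite normr_normc ltcR. Qed.

Lemma abs_Re_le_normc z : `|complex.Re z| <= normc z.
Proof. by case: z => x y; rewrite -sqrtr_sqr ler_wsqrtr // lerDl sqr_ge0. Qed.

Lemma abs_Im_le_normc z : `|complex.Im z| <= normc z.
Proof. by case: z => x y; rewrite -sqrtr_sqr ler_wsqrtr // lerDr sqr_ge0. Qed.

End ComplexModulus.

Section MajorantNorm.
Variables (R : realType) (a : nat * nat -> R[i]).
Implicit Types (m : amonom) (P Q : apoly R).

Lemma meval_fsubset m (D : {fset nat * nat}) :
  (finsupp m `<=` D)%fset -> meval a m = \prod_(k <- D) a k ^+ m k.
Proof.
move=> le_mD; rewrite /meval (big_fset_incl _ le_mD) //= => k _.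
by rewrite -cmE_eq0 => /eqP ->; rewrite expr0.
Qed.

Lemma meval1 : meval a (mone : amonom) = 1.
Proof. by rewrite /meval mdom1 big_seq_fset0. Qed.

Lemma mevalU k : meval a (ucm k) = a k.
Proof. by rewrite /meval mdomU big_seq_fset1 cmUU expr1. Qed.

Lemma mevalM m1 m2 : meval a (mmul m1 m2) = meval a m1 * meval a m2.
Proof.
rewrite (@meval_fsubset (mmul m1 m2) (finsupp m1 `|` finsupp m2)%fset) ?mdomD //.
rewrite (meval_fsubset (fsubsetUl (finsupp m1) (finsupp m2))).
rewrite (meval_fsubset (fsubsetUr (finsupp m1) (finsupp m2))) -big_split /=.
by apply: eq_bigr => k _; rewrite cmM exprD.
Qed.

Definition mnorm P : R := \sum_(m <- msupp P) normc P@_m * normc (meval a m).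

Lemma mnorm_fsubset P (D : {fset amonom}) :
  (msupp P `<=` D)%fset -> mnorm P = \sum_(m <- D) normc P@_m * normc (meval a m).
Proof.
move=> le_PD; rewrite /mnorm (big_fset_incl _ le_PD) //= => m _ Pm.
by rewrite mcoeff_outdom // normc0 mul0r.
Qed.

Lemma mnorm_ge0 P : 0 <= mnorm P.
Proof. by apply: sumr_ge0 => m _; apply: mulr_ge0; apply: normc_ge0. Qed.

Lemma mnorm0 : mnorm 0 = 0.
Proof. by rewrite /mnorm msupp0 big_seq_fset0. Qed.

Lemma mnormC_monom (c : R[i]) m : mnorm << c *g m >> = normc c * normc (meval a m).
Proof. by rewrite (mnorm_fsubset msuppU_le) big_seq_fset1 mcoeffUU. Qed.

Lemma mnorm1 : mnorm 1 = 1.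
Proof. by rewrite -mpolyC1E mnormC_monom meval1 normc1 mulr1. Qed.

Lemma mnormD P Q : mnorm (P + Q) <= mnorm P + mnorm Q.
Proof.
rewrite (mnorm_fsubset (msuppD_le P Q)) (mnorm_fsubset (fsubsetUl (msupp P) (msupp Q))).
rewrite (mnorm_fsubset (fsubsetUr (msupp P) (msupp Q))) -big_split /=.
apply: ler_sum => m _; rewrite mcoeffD -mulrDl.
by apply: ler_wpM2r; [apply: normc_ge0 | apply: le_normcD].
Qed.

Lemma mnorm_sum I (r : seq I) (Pr : pred I) (F : I -> apoly R) :
  mnorm (\sum_(i <- r | Pr i) F i) <= \sum_(i <- r | Pr i) mnorm (F i).
Proof.
elim/big_ind2: _ => [|P1 r1 P2 r2 le1 le2|//]; first by rewrite mnorm0.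
exact: le_trans (mnormD _ _) (lerD le1 le2).
Qed.

Lemma mnormM P Q : mnorm (P * Q) <= mnorm P * mnorm Q.
Proof.
rewrite malgME; apply: le_trans (mnorm_sum _ _ _) _.
rewrite /mnorm big_distrlr /=; apply: ler_sum => m1 _.
apply: le_trans (mnorm_sum _ _ _) _; apply: ler_sum => m2 _.
by rewrite mnormC_monom mevalM !normcM mulrACA.
Qed.

Lemma mnormZ (c : R[i]) P : mnorm (c *: P) <= normc c * mnorm P.
Proof.
rewrite (mnorm_fsubset (msuppZ_le c P)) /mnorm big_distrr /=.
by apply: ler_sum => m _; rewrite mcoeffZ normcM mulrA.
Qed.

Lemma mnorm_avar s i j :
  in_Dinf s a -> (2 * s < i + j)%N -> mnorm (avar R i j) <= 1.
Proof.
move=> Da lt_ij; rewrite /avar mnormC_monom normc1 mul1r mevalU.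
exact/normc_le/Da.
Qed.

Lemma normc_peval_le P : normc (peval a P) <= mnorm P.
Proof. by apply: le_trans (normc_sum _ _ _) _; apply: ler_sum => m _; rewrite normcM. Qed.

End MajorantNorm.

Lemma sum_ord_subn_eq (V : nmodType) n c (F : nat -> V) :
  \sum_(l < n.+1) (if (n - l == c)%N then F l else 0) =
  if (c <= n)%N then F (n - c)%N else 0.
Proof.
rewrite -big_mkcond /=; case: leqP => [le_cn|lt_nc]; last first.
  by rewrite big_pred0 // => l; apply/eqP => eq_c; move: lt_nc; rewrite -eq_c ltnNge leq_subr.
rewrite (eq_bigl (fun l : 'I_n.+1 => l == (n - c)%N :> nat)).
  by rewrite (big_ord1_eq _ F) ltnS leq_subr.
move=> l; have := ltn_ord l; rewrite ltnS => le_ln.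
by apply/eqP/eqP => [<-|->]; rewrite subKn.
Qed.

Section FormalSolution.
Variables (R : realType) (s : nat).
Implicit Types (b f g : fps R) (d p q : nat).

Definition bstar_rhs b : fps R := fun p q =>
  \sum_(i < p.+1) \sum_(j < q.+1)
    (if (2 * s < i + j)%N then
       avar R i j * fps_mul (fps_pow (psi1 b) i) (fps_pow (psi2 b) j) p q
     else 0).

Definition agree_below d f g := forall p q, (p + q < d)%N -> f p q = g p q.

Lemma agree_below_le d d' f g :
  (d' <= d)%N -> agree_below d f g -> agree_below d' f g.
Proof. by move=> le_d fg p q lt_pq; apply: fg; apply: leq_trans le_d. Qed.

Lemma agree_below_trans d f g h :
  agree_below d f g -> agree_below d g h -> agree_below d f h.
Proof. by move=> fg gh p q lt_pq; rewrite fg ?gh. Qed.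

Lemma agree_below_mul d f f' g g' :
  agree_below d f f' -> agree_below d g g' ->
  agree_below d (fps_mul f g) (fps_mul f' g').
Proof.
move=> ff' gg' p q lt_pq; apply: eq_bigr => k _; apply: eq_bigr => l _.
have := ltn_ord k; have := ltn_ord l => lt_l lt_k.
by rewrite ff' ?gg' //; lia.
Qed.

Lemma agree_below_pow d f f' n :
  agree_below d f f' -> agree_below d (fps_pow f n) (fps_pow f' n).
Proof.
move=> ff'; elim: n => [|n IHn]; first by [].
exact: agree_below_mul.
Qed.

Lemma agree_below_exp d f f' :
  agree_below d f f' -> agree_below d (fps_exp f) (fps_exp f').
Proof.
move=> ff' p q lt_pq; rewrite /fps_exp; apply: eq_bigr => n _.
by rewrite (agree_below_pow n ff' lt_pq).
Qed.

Lemma fps_mul_monomialE f p0 q0 p q :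
  fps_mul f (fun i j => if (i == p0) && (j == q0) then 1 else 0) p q =
  if (p0 <= p)%N && (q0 <= q)%N then f (p - p0)%N (q - q0)%N else 0.
Proof.
pose G k := if (q0 <= q)%N then f k (q - q0)%N else 0.
transitivity (\sum_(k < p.+1) if (p - k == p0)%N then G k else 0).
  apply: eq_bigr => k _; rewrite /G -(sum_ord_subn_eq q q0 (f k)).
  case: (p - k == p0)%N; last by rewrite big1 // => l _; rewrite mulr0.
  by apply: eq_bigr => l _; case: (q - l == q0)%N; rewrite ?mulr1 ?mulr0.
by rewrite (sum_ord_subn_eq p p0 G) /G; case: (p0 <= p)%N.
Qed.

Lemma psi1E b p q : psi1 b p q = if p is p'.+1 then fps_exp b p' q else 0.
Proof. by rewrite /psi1 fps_mul_monomialE subn0; case: p => [|p] //=; rewrite subn1. Qed.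

Lemma psi2E b p q : psi2 b p q = if q is q'.+1 then fps_exp b p q' else 0.
Proof. by rewrite /psi2 fps_mul_monomialE subn0 andbC; case: q => [|q] //=; rewrite subn1. Qed.

Lemma agree_below_psi1 d b b' :
  agree_below d b b' -> agree_below d.+1 (psi1 b) (psi1 b').
Proof.
move=> bb' [|p] q lt_pq; rewrite !psi1E; first by [].
by apply: (agree_below_exp bb'); rewrite -ltnS -addSn.
Qed.

Lemma agree_below_psi2 d b b' :
  agree_below d b b' -> agree_below d.+1 (psi2 b) (psi2 b').
Proof.
move=> bb' p [|q] lt_pq; rewrite !psi2E; first by [].
by apply: (agree_below_exp bb'); rewrite -ltnS -addnS.
Qed.

Lemma agree_below_bstar_rhs d b b' :
  agree_below d b b' -> agree_below d.+1 (bstar_rhs b) (bstar_rhs b').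
Proof.
move=> bb' p q lt_pq; rewrite /bstar_rhs.
apply: eq_bigr => i _; apply: eq_bigr => j _; case: (2 * s < i + j)%N; last by [].
have := agree_below_mul (agree_below_pow i (agree_below_psi1 bb'))
                        (agree_below_pow j (agree_below_psi2 bb')) lt_pq.
move=> e; exact: (congr1 (fun P => avar R i j * P) e).
Qed.

Definition bstar_approx n : fps R := iter n bstar_rhs (fun _ _ => 0).

Lemma agree_below_bstar_approx_succ n :
  agree_below n (bstar_approx n) (bstar_approx n.+1).
Proof.
elim: n => [|n IHn]; first by move=> p q.
exact: agree_below_bstar_rhs.
Qed.

Lemma agree_below_bstar_approx d n :
  (d <= n)%N -> agree_below d (bstar_approx d) (bstar_approx n).
Proof.
move=> /subnKC <-; elim: (n - d)%N => [|k IHk].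
  by rewrite addn0 => p q.
apply: agree_below_trans IHk _; rewrite addnS.
exact: agree_below_le (leq_addr k d) (@agree_below_bstar_approx_succ (d + k)).
Qed.

(* The coefficient of total degree [n] is settled from the [n.+1]-th iterate on. *)
Definition bstar : fps R := fun p q => bstar_approx (p + q).+1 p q.

Lemma bstarP : is_bstar s bstar.
Proof.
split.
  rewrite /bstar /= /bstar_rhs !big_ord1.
  by have -> : (2 * s < @ord0 0 + @ord0 0)%N = false.
move=> p q; transitivity (bstar_rhs (bstar_approx (p + q)) p q); first by [].
apply: (@agree_below_bstar_rhs (p + q)) (ltnSn _) => p' q' lt_pq'.
exact/esym/agree_below_bstar_approx.
Qed.

End FormalSolution.

Section MajorantSums.
Variables (R : realType) (a : nat * nat -> R[i]) (r : R).
Hypothesis r_ge0 : 0 <= r.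
Implicit Types (f g b : fps R) (N M : nat).

Definition majsum f N M : R :=
  \sum_(0 <= p < N) \sum_(0 <= q < M) mnorm a (f p q) * (r ^+ p * r ^+ q).

Let weight_ge0 p q : 0 <= r ^+ p * r ^+ q.
Proof. by apply: mulr_ge0; apply: exprn_ge0. Qed.

Lemma majsum_ge0 f N M : 0 <= majsum f N M.
Proof.
apply: sumr_ge0 => p _; apply: sumr_ge0 => q _.
exact: mulr_ge0 (mnorm_ge0 _ _) (weight_ge0 p q).
Qed.

Lemma majsum0l f M : majsum f 0 M = 0.
Proof. by rewrite /majsum big_geq. Qed.

Lemma majsum0r f N : majsum f N 0 = 0.
Proof. by rewrite /majsum big1 // => p _; rewrite big_geq. Qed.

Lemma mnorm_fps_mul f g p q :
  mnorm a (fps_mul f g p q) <=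
  \sum_(0 <= k < p.+1) \sum_(0 <= l < q.+1)
    mnorm a (f k l) * mnorm a (g (p - k)%N (q - l)%N).
Proof.
rewrite /fps_mul big_mkord; apply: le_trans (mnorm_sum _ _ _ _) _.
apply: ler_sum => k _; rewrite big_mkord; apply: le_trans (mnorm_sum _ _ _ _) _.
by apply: ler_sum => l _; apply: mnormM.
Qed.

Lemma majsum_mul f g N M : majsum (fps_mul f g) N M <= majsum f N M * majsum g N M.
Proof.
pose A h k l := mnorm a (h k l) * (r ^+ k * r ^+ l).
have A_ge0 h k l : 0 <= A h k l by exact: mulr_ge0 (mnorm_ge0 _ _) (weight_ge0 k l).
apply: (@le_trans _ _ (\sum_(0 <= p < N) \sum_(0 <= q < M) \sum_(0 <= k < p.+1)
    \sum_(0 <= l < q.+1) A f k l * A g (p - k)%N (q - l)%N)).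
  apply: ler_sum => p _; apply: ler_sum => q _.
  apply: le_trans (ler_wpM2r (weight_ge0 p q) (mnorm_fps_mul f g p q)) _.
  rewrite mulr_suml; apply: ler_sum_nat => k /andP [_ lt_kp].
  rewrite mulr_suml; apply: ler_sum_nat => l /andP [_ lt_lq].
  have -> : r ^+ p = r ^+ k * r ^+ (p - k)%N by rewrite -exprD subnKC.
  have -> : r ^+ q = r ^+ l * r ^+ (q - l)%N by rewrite -exprD subnKC.
  by rewrite le_eqVlt; apply/predU1P; left; rewrite /A; ring.
have G_ge0 k l k' l' : 0 <= A f k l * A g k' l' by exact: mulr_ge0.
apply: le_trans (@sum_antidiagonal2_le _ (fun k l k' l' => A f k l * A g k' l') N M G_ge0) _.
rewrite le_eqVlt; apply/predU1P; left.
rewrite /majsum mulr_suml; apply: eq_bigr => k _; rewrite mulr_suml; apply: eq_bigr => l _.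
by rewrite mulr_sumr; apply: eq_bigr => k' _; rewrite mulr_sumr.
Qed.

Lemma majsum_one N M : majsum (fps_one R) N M <= 1.
Proof.
case: N => [|N]; first by rewrite majsum0l ler01.
case: M => [|M]; first by rewrite majsum0r ler01.
rewrite /majsum big_nat_recl //.
rewrite [X in _ + X]big1 ?addr0; last first.
  by move=> p _; apply: big1 => q _; rewrite /fps_one /= mnorm0 mul0r.
rewrite big_nat_recl // [X in _ + X]big1 ?addr0; last first.
  by move=> q _; rewrite /fps_one /= mnorm0 mul0r.
by rewrite /fps_one /= mnorm1 !expr0 !mulr1.
Qed.

Lemma majsum_pow f n N M : majsum (fps_pow f n) N M <= majsum f N M ^+ n.
Proof.
elim: n => [|n IHn]; first exact: majsum_one.
apply: le_trans (majsum_mul f (fps_pow f n) N M) _; rewrite exprS.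
apply: ler_wpM2l; [exact: majsum_ge0 | exact: IHn].
Qed.

Lemma normc_invfact n : normc ((n`!%:R : R[i])^-1) <= 1.
Proof.
by apply: normc_le; rewrite normfV normr_nat invf_le1 ?ler1n ?fact_gt0.
Qed.

Lemma mnorm_fps_exp f p q :
  mnorm a (fps_exp f p q) <= \sum_(0 <= n < (p + q).+1) mnorm a (fps_pow f n p q).
Proof.
rewrite /fps_exp big_mkord; apply: le_trans (mnorm_sum _ _ _ _) _.
apply: ler_sum => n _; apply: le_trans (mnormZ _ _ _) _.
rewrite -[X in _ <= X]mul1r; apply: ler_wpM2r; first exact: mnorm_ge0.
exact: normc_invfact.
Qed.

Lemma majsum_exp f N M :
  majsum (fps_exp f) N M <= \sum_(0 <= n < N + M) majsum f N M ^+ n.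
Proof.
apply: (@le_trans _ _ (\sum_(0 <= p < N) \sum_(0 <= q < M) \sum_(0 <= n < N + M)
     mnorm a (fps_pow f n p q) * (r ^+ p * r ^+ q))).
  apply: ler_sum_nat => p /andP [_ lt_pN]; apply: ler_sum_nat => q /andP [_ lt_qM].
  rewrite -mulr_suml; apply: ler_wpM2r; first exact: weight_ge0.
  apply: le_trans (mnorm_fps_exp f p q) _.
  by apply: ler_sum_nat_widen => [|n]; [lia | exact: mnorm_ge0].
under eq_bigr do rewrite exchange_big.
by rewrite exchange_big; apply: ler_sum => n _; apply: majsum_pow.
Qed.

Lemma majsum_psi1 b N M : majsum (psi1 b) N.+1 M = r * majsum (fps_exp b) N M.
Proof.
rewrite /majsum big_nat_recl // big1 => [|q _]; last by rewrite psi1E mnorm0 mul0r.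
rewrite add0r mulr_sumr; apply: eq_bigr => p _; rewrite mulr_sumr; apply: eq_bigr => q _.
by rewrite psi1E exprS; ring.
Qed.

Lemma majsum_psi2 b N M : majsum (psi2 b) N M.+1 = r * majsum (fps_exp b) N M.
Proof.
rewrite /majsum mulr_sumr; apply: eq_bigr => p _.
rewrite big_nat_recl // psi2E mnorm0 mul0r add0r mulr_sumr; apply: eq_bigr => q _.
by rewrite psi2E exprS; ring.
Qed.

End MajorantSums.

Section BstarBound.
Variables (R : realType) (s : nat) (a : nat * nat -> R[i]) (r : R) (b : fps R).
Hypotheses (r_ge0 : 0 <= r) (r_le : r <= 1 / 32).
Hypotheses (bstar_b : is_bstar s b) (Da : in_Dinf s a).

Local Notation majsum := (majsum a r).
Local Notation psi_pow i j := (fps_mul (fps_pow (psi1 b) i) (fps_pow (psi2 b) j)).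

Lemma mnorm_bstar_le p q N M : (p < N)%N -> (q < M)%N ->
  mnorm a (b p q) <= \sum_(0 <= i < N) \sum_(0 <= j < M)
     (if (2 * s < i + j)%N then mnorm a (psi_pow i j p q) else 0).
Proof.
move=> lt_pN lt_qM.
have term_ge0 i j : 0 <= if (2 * s < i + j)%N then mnorm a (psi_pow i j p q) else 0.
  by case: ifP => _; [exact: mnorm_ge0 | exact: lexx].
apply: (@le_trans _ _ (\sum_(0 <= i < p.+1) \sum_(0 <= j < q.+1)
     (if (2 * s < i + j)%N then mnorm a (psi_pow i j p q) else 0))).
  rewrite (proj2 bstar_b p q) big_mkord; apply: le_trans (mnorm_sum _ _ _ _) _.
  apply: ler_sum => i _; rewrite big_mkord; apply: le_trans (mnorm_sum _ _ _ _) _.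
  apply: ler_sum => j _; case: ifPn => lt_s; last by rewrite mnorm0.
  apply: le_trans (mnormM _ _ _) _; rewrite -[X in _ <= X]mul1r.
  by apply: ler_wpM2r; [exact: mnorm_ge0 | exact: mnorm_avar Da lt_s].
apply: le_trans (ler_sum_nat_widen lt_pN _) _.
  by move=> i; apply: sumr_ge0 => j _; exact: term_ge0.
by apply: ler_sum => i _; apply: ler_sum_nat_widen => // j; exact: term_ge0.
Qed.

Lemma majsum_bstar_le N M : majsum b N M <= \sum_(0 <= i < N) \sum_(0 <= j < M)
     (if (2 * s < i + j)%N then majsum (psi_pow i j) N M else 0).
Proof.
apply: (@le_trans _ _ (\sum_(0 <= p < N) \sum_(0 <= q < M) \sum_(0 <= i < N)
   \sum_(0 <= j < M) (if (2 * s < i + j)%N then mnorm a (psi_pow i j p q) else 0) *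
   (r ^+ p * r ^+ q))).
  apply: ler_sum_nat => p /andP [_ lt_pN]; apply: ler_sum_nat => q /andP [_ lt_qM].
  under [X in _ <= X]eq_bigr do rewrite -mulr_suml.
  rewrite -mulr_suml; apply: ler_wpM2r; first by apply: mulr_ge0; apply: exprn_ge0.
  exact: mnorm_bstar_le.
under eq_bigr do rewrite exchange_big.
rewrite exchange_big; apply: ler_sum => i _.
under eq_bigr do rewrite exchange_big.
rewrite exchange_big; apply: ler_sum => j _; case: (2 * s < i + j)%N; first exact: lexx.
by rewrite big1 // => p _; rewrite big1 // => q _; rewrite mul0r.
Qed.

Lemma majsum_psi_pow i j N M :
  majsum (psi_pow i j) N M <= majsum (psi1 b) N M ^+ i * majsum (psi2 b) N M ^+ j.
Proof.
apply: le_trans (majsum_mul _ r_ge0 _ _ _ _) _.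
by apply: ler_pM; try exact: majsum_ge0; exact: majsum_pow.
Qed.

Lemma majsum_psi1_le N M : majsum b N M <= 1 / 2 -> majsum (psi1 b) N.+1 M <= 2 * r.
Proof.
move=> b_le; rewrite majsum_psi1 mulrC; apply: ler_wpM2r => //.
apply: le_trans (majsum_exp _ r_ge0 _ _ _) _.
by apply: geometric_sum_le2 => //; exact: majsum_ge0.
Qed.

Lemma majsum_psi2_le N M : majsum b N M <= 1 / 2 -> majsum (psi2 b) N M.+1 <= 2 * r.
Proof.
move=> b_le; rewrite majsum_psi2 mulrC; apply: ler_wpM2r => //.
apply: le_trans (majsum_exp _ r_ge0 _ _ _) _.
by apply: geometric_sum_le2 => //; exact: majsum_ge0.
Qed.

Lemma majsum_bstar_le_half N M : majsum b N M <= 1 / 2.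
Proof.
have r2_ge0 : 0 <= 2 * r by move: r_ge0; lra.
have r2_le : 2 * r <= 1 / 2 by move: r_le; lra.
have r16_le : 8 * (2 * r) <= 1 / 2 by move: r_le; lra.
have [n le_NMn] := ubnP (N + M); elim: n N M le_NMn => [|n IHn] [|N] [|M] //= lt_NMn;
  rewrite ?majsum0l ?majsum0r; try lra.
have psi1_le : majsum (psi1 b) N.+1 M.+1 <= 2 * r by apply/majsum_psi1_le/IHn; lia.
have psi2_le : majsum (psi2 b) N.+1 M.+1 <= 2 * r by apply/majsum_psi2_le/IHn; lia.
apply: le_trans (majsum_bstar_le _ _) _.
apply: le_trans (le_trans (sum_expr_deg_gt_le s N.+1 M.+1 r2_ge0 r2_le) r16_le).
apply: ler_sum => i _; apply: ler_sum => j _; case: (2 * s < i + j)%N; last exact: lexx.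
apply: le_trans (majsum_psi_pow i j _ _) _.
have psi1_ge0 := majsum_ge0 a r_ge0 (psi1 b) N.+1 M.+1.
have psi2_ge0 := majsum_ge0 a r_ge0 (psi2 b) N.+1 M.+1.
apply: ler_pM; [exact: exprn_ge0 psi1_ge0 | exact: exprn_ge0 psi2_ge0 | |].
  exact: lerXn2r psi1_ge0 r2_ge0 psi1_le.
exact: lerXn2r psi2_ge0 r2_ge0 psi2_le.
Qed.

Lemma majsum_psi1_bound N M : majsum (psi1 b) N M <= 2 * r.
Proof.
case: N => [|N]; first by rewrite majsum0l; move: r_ge0; lra.
exact/majsum_psi1_le/majsum_bstar_le_half.
Qed.

Lemma majsum_psi2_bound N M : majsum (psi2 b) N M <= 2 * r.
Proof.
case: M => [|M]; first by rewrite majsum0r; move: r_ge0; lra.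
exact/majsum_psi2_le/majsum_bstar_le_half.
Qed.

End BstarBound.

Definition sqsum (V : nmodType) (d : nat -> nat -> V) N : V :=
  \sum_(0 <= p < N) \sum_(0 <= q < N) d p q.

Section SquareSums.
Variable R : realType.
Local Open Scope classical_set_scope.
Implicit Types (d t : nat -> nat -> R).

Lemma sqsum_cvg_ge0 d K : (forall p q, 0 <= d p q) ->
  (forall N, sqsum d N <= K) -> cvgn (sqsum d).
Proof.
move=> d_ge0 d_le; apply: nondecreasing_is_cvgn; last by exists K => _ [N _ <-].
move=> n m le_nm; apply: (@le_trans _ _ (\sum_(0 <= p < n) \sum_(0 <= q < m) d p q)).
  by apply: ler_sum => p _; apply: ler_sum_nat_widen.
by apply: ler_sum_nat_widen => // p; apply: sumr_ge0 => q _.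
Qed.

(* Split [d] as [(d + t) - t], a difference of two nonnegative double series. *)
Lemma sqsum_cvg_dominated d t K : (forall p q, `|d p q| <= t p q) ->
  (forall N, sqsum t N <= K) -> cvgn (sqsum d) /\ `|limn (sqsum d)| <= K.
Proof.
move=> d_le t_le.
have t_ge0 p q : 0 <= t p q by exact: le_trans (normr_ge0 _) (d_le p q).
have sqsum_d_le N : - K <= sqsum d N <= K.
  rewrite -ler_norml; apply: le_trans (t_le N); apply: le_trans (ler_norm_sum _ _ _) _.
  by apply: ler_sum => p _; apply: le_trans (ler_norm_sum _ _ _) _; apply: ler_sum.
have dt_ge0 p q : 0 <= d p q + t p q.
  by rewrite -lerBlDr sub0r; move: (d_le p q); rewrite ler_norml => /andP [].
have cvg_d : cvgn (sqsum d).
  have -> : sqsum d = sqsum (fun p q => d p q + t p q) - sqsum t.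
    apply/funext => N; rewrite /sqsum !fctE -sumrB; apply: eq_bigr => p _.
    by rewrite -sumrB; apply: eq_bigr => q _; rewrite addrK.
  apply: is_cvgB; last exact: sqsum_cvg_ge0 t_ge0 t_le.
  apply: (sqsum_cvg_ge0 (K := K + K)) dt_ge0 _ => N.
  rewrite /sqsum; under eq_bigr do rewrite big_split.
  rewrite big_split /=; apply: lerD; last exact: t_le N.
  apply: le_trans (t_le N); apply: ler_sum => p _; apply: ler_sum => q _.
  exact: le_trans (ler_norm _) (d_le p q).
split=> //; rewrite ler_norml; apply/andP; split.
  by apply: limr_ge cvg_d _; apply: nearW => N; case/andP: (sqsum_d_le N).
by apply: limr_le cvg_d _; apply: nearW => N; case/andP: (sqsum_d_le N).
Qed.

Lemma esum_le_sqsum (c : nat * nat -> R) K : (forall pq, 0 <= c pq) ->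
  (forall N, sqsum (fun p q => c (p, q)) N <= K) ->
  (\esum_(pq in [set: nat * nat]) (c pq)%:E <= K%:E)%E.
Proof.
move=> c_ge0 c_le; apply: ge_ereal_sup => _ [F [/finite_fsetP [X ->] _] <-].
set N := (\max_(pq <- X) (pq.1 + pq.2)).+1.
set S := [seq (i, j) | i <- index_iota 0 N, j <- index_iota 0 N].
have X_sub : {subset [set` X] <= [set` S]}.
  move=> [i j]; rewrite !inE /= => ijX.
  have le_ij : (i + j <= \max_(pq <- X) (pq.1 + pq.2))%N :=
    @leq_bigmax_seq _ (enum_fset X) xpredT (fun pq => (pq.1 + pq.2)%N) (i, j) ijX isT.
  by apply: allpairs_f; rewrite mem_index_iota /N; lia.
have S_uniq : uniq S.
  by apply: allpairs_uniq; try exact: iota_uniq; move=> [? ?] [? ?] _ _ [-> ->].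
apply: le_trans (lee_fsum_nneg_subset (finite_fset X) (finite_seq S) X_sub _) _.
  by move=> pq _; rewrite lee_fin.
rewrite -fsbig_seq // big_allpairs.
under eq_bigr do rewrite sumEFin.
by rewrite sumEFin lee_fin; exact: c_le.
Qed.

End SquareSums.

Section SeriesValue.
Local Open Scope classical_set_scope.
Variables (R : realType) (a : nat * nat -> R[i]) (r : R) (f : fps R) (x y : R[i]) (K : R).
Hypotheses (r_ge0 : 0 <= r) (x_le : normc x <= r) (y_le : normc y <= r).
Hypothesis majsum_le : forall N M, majsum a r f N M <= K.

Let term p q := peval a (f p q) * x ^+ p * y ^+ q.

Lemma normc_weight_le p q : normc x ^+ p * normc y ^+ q <= r ^+ p * r ^+ q.
Proof.
have [nx_ge0 ny_ge0] := (normc_ge0 x, normc_ge0 y).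
apply: ler_pM; [exact: exprn_ge0 | exact: exprn_ge0 | |].
  exact: lerXn2r nx_ge0 r_ge0 x_le.
exact: lerXn2r ny_ge0 r_ge0 y_le.
Qed.

Lemma normc_term_le p q : normc (term p q) <= mnorm a (f p q) * (r ^+ p * r ^+ q).
Proof.
rewrite /term !normcM !normcX -mulrA.
apply: ler_pM; [exact: normc_ge0 | | exact: normc_peval_le | exact: normc_weight_le].
by apply: mulr_ge0; apply: exprn_ge0; exact: normc_ge0.
Qed.

Lemma fps_psumE N : fps_psum f x y a N = sqsum term N.
Proof. by rewrite /fps_psum /sqsum big_mkord; apply: eq_bigr => p _; rewrite big_mkord. Qed.

Lemma abs_lim_psum_le (L : {additive R[i] -> R}) :
  (forall z, `|L z| <= normc z) -> `|limn (fun N => L (fps_psum f x y a N))| <= K.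
Proof.
move=> L_le.
have -> : (fun N => L (fps_psum f x y a N)) = sqsum (fun p q => L (term p q)).
  apply/funext => N; rewrite fps_psumE /sqsum raddf_sum; apply: eq_bigr => p _.
  by rewrite raddf_sum.
apply: (proj2 (sqsum_cvg_dominated (t := fun p q => mnorm a (f p q) * (r ^+ p * r ^+ q)) _ _)).
  by move=> p q; apply: le_trans (L_le _) (normc_term_le p q).
by move=> N; exact: (majsum_le N N).
Qed.

Lemma fps_val_lt_third : K <= 1 / 16 -> `|fps_val f x y a| < (1 / 3)%:C%C.
Proof.
move=> K_le; have Re_le := abs_lim_psum_le (L := @complex.Re R) (@abs_Re_le_normc R).
have Im_le := abs_lim_psum_le (L := @complex.Im R) (@abs_Im_le_normc R).
move: Re_le Im_le; rewrite /fps_val; set u := limn _; set v := limn _ => u_le v_le.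
rewrite normr_normc ltcR /=.
move: u_le v_le; rewrite !ler_norml => /andP [u_ge u_le] /andP [v_ge v_le].
have third : 1 / 3 = Num.sqrt ((1 / 3) ^+ 2) :> R by rewrite sqrtr_sqr ger0_norm //; lra.
by rewrite third ltr_sqrt ?expr2; nra.
Qed.

Lemma esum_monomial_terms p q :
  (\esum_(m in [set: amonom])
     (complex.Re `|(f p q)@_m * meval a m * x ^+ p * y ^+ q|)%:E =
   (mnorm a (f p q) * (normc x ^+ p * normc y ^+ q))%:E)%E.
Proof.
transitivity (\esum_(m in [set` msupp (f p q)])
     (complex.Re `|(f p q)@_m * meval a m * x ^+ p * y ^+ q|)%:E)%E.
  rewrite [RHS]esum_mkcond; apply: eq_esum => m _; case: ifPn => // m_supp.
  rewrite mcoeff_outdom ?mul0r ?normr0 //.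
  by apply: contra m_supp; rewrite in_setE.
rewrite esum_fset; [|exact: finite_fset | by move=> m _; rewrite lee_fin Re_normr normc_ge0].
rewrite -fsbig_seq ?fset_uniq // sumEFin /mnorm mulr_suml; congr (_%:E).
by apply: eq_bigr => m _; rewrite Re_normr !normcM !normcX -!mulrA.
Qed.

Lemma abs_conv_of_majsum_le : abs_conv f x y a.
Proof.
rewrite /abs_conv.
have -> : [set: (nat * nat * amonom)%type] = [set: nat * nat] `*`` (fun _ => [set: amonom]).
  by apply/seteqP; split.
pose term_norm pq m :=
  (complex.Re `|(f pq.1 pq.2)@_m * meval a m * x ^+ pq.1 * y ^+ pq.2|)%:E.
rewrite -(@esum_esum _ _ _ _ _ term_norm); last first.
  by move=> *; rewrite lee_fin Re_normr normc_ge0.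
under eq_esum do rewrite esum_monomial_terms.
apply: le_lt_trans (ltry K); apply: esum_le_sqsum => [[p q]|N].
  by apply: mulr_ge0; [exact: mnorm_ge0 | apply: mulr_ge0; apply: exprn_ge0; exact: normc_ge0].
apply: le_trans (majsum_le N N); apply: ler_sum => p _; apply: ler_sum => q _.
by apply: ler_wpM2l; [exact: mnorm_ge0 | exact: normc_weight_le].
Qed.

End SeriesValue.

Theorem lemma4p2 (R : realType) (s : nat) (hs : (0 < s)%N) :
  (exists b : fps R, is_bstar s b) /\
  exists R1 : R, 0 < R1 < 1 /\
    forall b : fps R, is_bstar s b ->
    forall a : nat * nat -> R[i], in_Dinf s a ->
    forall x y : R[i], in_bidisc R1 x y ->
      abs_conv (psi1 b) x y a /\ abs_conv (psi2 b) x y a /\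
      in_bidisc (1 / 3) (fps_val (psi1 b) x y a) (fps_val (psi2 b) x y a).
Proof.
split; first by exists (bstar R s); exact: bstarP.
exists (1 / 32); split; first by apply/andP; split; lra.
move=> b bstar_b a Da x y [/normc_lt/ltW x_le /normc_lt/ltW y_le].
have r_ge0 : 0 <= 1 / 32 :> R by lra.
have psi1_le N M : majsum a (1 / 32) (psi1 b) N M <= 1 / 16.
  by apply: le_trans (majsum_psi1_bound r_ge0 (lexx _) bstar_b Da N M) _; lra.
have psi2_le N M : majsum a (1 / 32) (psi2 b) N M <= 1 / 16.
  by apply: le_trans (majsum_psi2_bound r_ge0 (lexx _) bstar_b Da N M) _; lra.
split; first exact: abs_conv_of_majsum_le r_ge0 x_le y_le psi1_le.
split; first exact: abs_conv_of_majsum_le r_ge0 x_le y_le psi2_le.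
by split; apply: fps_val_lt_third r_ge0 x_le y_le _ (lexx _).
Qed.
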